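(* Let $\hat\mu\in\operatorname{conv}\{g_1,\dots,g_N\}$ and consider the MW–MMW rounds for the fixed center $\hat\mu$ with $w^{(1)}$ having positive entries and $0<\eta_\rho\nu\le1/2$, $0<\eta_w\nu\le 1/2$. Then for every $w\in\Delta_{N,\epsilon}$ and every $\rho\in\mathfrak D_p$, $$\sum_{t=1}^T\langle S^{(t)},\rho\rangle\le(1+\eta_\rho\nu)(1+\eta_w\nu)\sum_{t=1}^T\langle m^{(t)},w\rangle+\frac{(1+\eta_\rho\nu)\,\mathrm{RE}(w\|w^{(1)})}{\eta_w}+\frac{\log p}{\eta_\rho}.$$ In particular, for the uniform initialization $w^{(1)}=(1/N,\dots,1/N)$, $$\sum_{t=1}^T\langle S^{(t)},\rho\rangle\le(1+\eta_\rho\nu)(1+\eta_w\nu)\sum_{t=1}^T\langle m^{(t)},w\rangle+\frac{(1+\eta_\rho\nu)\log\frac{1}{1-\epsilon}}{\eta_w}+\frac{\log p}{\eta_\rho}.$$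
   Context: Fix integers $N\ge1$, $p\ge1$, $\epsilon\in[0,1)$ and vectors $g_1,\dots,g_N\in\mathbb R^p$. The capped simplex is $\Delta_{N,\epsilon}=\{w\in\mathbb R^N:\sum_n w_n=1,\ 0\le w_n\le \frac{1}{(1-\epsilon)N}\}$; density matrices $\mathfrak D_p=\{\rho\in\mathbb R^{p\times p}:\rho=\rho^\top\succeq0,\mathrm{Tr}\,\rho=1\}$; $\langle A,B\rangle=\mathrm{Tr}(A^\top B)$; $\nu=\max_{i,j}\|g_i-g_j\|_2^2$. Relative entropy: $\mathrm{RE}(w\|v)=\sum_n w_n\log(w_n/v_n)$ (with $0\log0=0$). MW–MMW rounds for a fixed center $\hat\mu\in\mathbb R^p$: let $z_n=g_n-\hat\mu$, initial weights $w^{(1)}\in\Delta_{N,\epsilon}$, step sizes $\eta_w,\eta_\rho>0$, and $T\ge1$. For $t=1,\dots,T$: $S^{(t)}=\sum_n w^{(t)}_n z_nz_n^\top$; $\rho^{(t)}=\exp(\eta_\rho\sum_{t'=1}^t S^{(t')})/\mathrm{Tr}\exp(\eta_\rho\sum_{t'=1}^tS^{(t')})$; loss vector $m^{(t)}_n=z_n^\top\rho^{(t)}z_n$; $\tilde w^{(t)}_n=w^{(t)}_n(1-\eta_w m^{(t)}_n)$; $w^{(t+1)}=\arg\min_{w\in\Delta_{N,\epsilon}}\mathrm{RE}(w\|\tilde w^{(t)})$. *)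

From HB Require Import structures.
From mathcomp Require Import all_boot all_order all_algebra.
From mathcomp Require Import all_classical all_reals all_analysis.
Set Implicit Arguments. Unset Strict Implicit. Unset Printing Implicit Defensive.
Import Order.TTheory GRing.Theory Num.Theory numFieldNormedType.Exports.
Local Open Scope ring_scope.

Section MWMMW.
Variable R : realType.

Definition mexp (p : nat) (A : 'M[R]_p) : 'M[R]_p :=
  \matrix_(i, j) limn (series (fun k : nat => (A ^+ k) i j / (k`!)%:R)).

Definition frob (p : nat) (A B : 'M[R]_p) : R := \tr (A^T *m B).

Definition sqnorm (p : nat) (x : 'cV[R]_p) : R := (x^T *m x) 0 0.

(* nu = max_{i,j} ||g_i - g_j||^2 (all terms are >= 0, so 0 is a neutral base). *)
Definition nu (N p : nat) (g : 'I_N -> 'cV[R]_p) : R :=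
  \big[Num.max/0]_(i < N) \big[Num.max/0]_(j < N) sqnorm (g i - g j).

Definition capped_simplex (N : nat) (eps : R) (w : 'I_N -> R) : Prop :=
  \sum_(n < N) w n = 1 /\
  forall n, 0 <= w n /\ w n <= ((1 - eps) * N%:R)^-1.

Definition density (p : nat) (rho : 'M[R]_p) : Prop :=
  rho^T = rho /\ (forall x : 'cV[R]_p, 0 <= (x^T *m rho *m x) 0 0) /\ \tr rho = 1.

Definition RE (N : nat) (w v : 'I_N -> R) : R :=
  \sum_(n < N) (if w n == 0 then 0 else w n * ln (w n / v n)).

Definition in_conv (N p : nat) (g : 'I_N -> 'cV[R]_p) (mu : 'cV[R]_p) : Prop :=
  exists lam : 'I_N -> R, (forall n, 0 <= lam n) /\ \sum_(n < N) lam n = 1 /\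
    mu = \sum_(n < N) lam n *: g n.

(* Ingredients of the MW-MMW rounds, given the weight sequence w : nat -> weights
   (w t is w^{(t)}, rounds are numbered from 1). *)
Definition zvec (N p : nat) (g : 'I_N -> 'cV[R]_p) (mu : 'cV[R]_p) (n : 'I_N) :=
  g n - mu.

Definition Smat (N p : nat) (g : 'I_N -> 'cV[R]_p) (mu : 'cV[R]_p)
  (w : 'I_N -> R) : 'M[R]_p :=
  \sum_(n < N) w n *: (zvec g mu n *m (zvec g mu n)^T).

Definition rhomat (N p : nat) (g : 'I_N -> 'cV[R]_p) (mu : 'cV[R]_p)
  (eta_rho : R) (w : nat -> 'I_N -> R) (t : nat) : 'M[R]_p :=
  let E := mexp (eta_rho *: \sum_(1 <= t' < t.+1) Smat g mu (w t')) in
  (\tr E)^-1 *: E.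

Definition lossvec (N p : nat) (g : 'I_N -> 'cV[R]_p) (mu : 'cV[R]_p)
  (eta_rho : R) (w : nat -> 'I_N -> R) (t : nat) (n : 'I_N) : R :=
  ((zvec g mu n)^T *m rhomat g mu eta_rho w t *m zvec g mu n) 0 0.

Definition wtilde (N p : nat) (g : 'I_N -> 'cV[R]_p) (mu : 'cV[R]_p)
  (eta_rho eta_w : R) (w : nat -> 'I_N -> R) (t : nat) (n : 'I_N) : R :=
  w t n * (1 - eta_w * lossvec g mu eta_rho w t n).

Definition is_RE_proj (N : nat) (eps : R) (v w' : 'I_N -> R) : Prop :=
  capped_simplex eps w' /\
  forall u, capped_simplex eps u -> RE w' v <= RE u v.

Definition mwmmw_run (N p : nat) (g : 'I_N -> 'cV[R]_p) (mu : 'cV[R]_p)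
  (eps eta_rho eta_w : R) (T : nat) (w : nat -> 'I_N -> R) : Prop :=
  forall t, (1 <= t <= T)%N ->
    is_RE_proj eps (wtilde g mu eta_rho eta_w w t) (w t.+1).

End MWMMW.

From HB Require Import structures.
From mathcomp Require Import all_boot all_order all_algebra.
From mathcomp Require Import all_classical all_reals all_analysis.
From mathcomp Require Import complex ring lra.
Set Implicit Arguments. Unset Strict Implicit. Unset Printing Implicit Defensive.
Import Order.TTheory GRing.Theory Num.Theory numFieldNormedType.Exports.
Local Open Scope ring_scope.

(* Two regret bounds are chained.  For the density player, the potential
   Phi_t = ln tr exp(eta_rho (S_1 + ... + S_t)) starts at Phi_0 = ln p, grows
   at round t by at most eta_rho <S_t, rho_t> (convexity of ln tr exp, in the
   Peierls-Bogoliubov form), and Phi_T >= eta_rho <S_1 + ... + S_T, rho> for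
   every density matrix rho (Gibbs' variational principle).  Moreover
   <S_t, rho_t> = <m_t, w_t> with 0 <= m_t <= nu, because rho_t is a density
   matrix and |z_n|^2 <= nu as mu lies in the convex hull of the g_n.  So the
   weight player is a multiplicative-weights learner with losses in [0, nu]:
   the Pythagorean inequality for relative-entropy projections onto the convex
   set Delta_{N,eps}, together with -ln (1 - x) <= x + x^2 on [0, 1/2], shows
   that each round decreases RE(v || w_t) by at least
   eta_w <m_t, w_t> - eta_w (1 + eta_w nu) <m_t, v>, and telescoping gives
   the bound.  For the uniform start, RE(v || w_1) <= ln (1 / (1 - eps))
   because every v_n <= 1 / ((1 - eps) N). *)

Section RealInequalities.
Variable R : realType.
Implicit Types (x y A B G : R).

Lemma jensen_expR (I : finType) (x w : I -> R) :
  (forall i, 0 <= w i) -> \sum_i w i = 1 ->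
  expR (\sum_i w i * x i) <= \sum_i w i * expR (x i).
Proof.
move=> w_ge0 w_sum1; set c := \sum_i w i * x i.
have tangent i : expR c * (1 + (x i - c)) <= expR (x i).
  by have := ler_wpM2l (expR_ge0 c) (expR_ge1Dx (x i - c)); rewrite -expRD subrKC.
apply: le_trans (ler_sum _ (fun i _ => ler_wpM2l (w_ge0 i) (tangent i))).
rewrite (eq_bigr (fun i => expR c * (w i + (w i * x i - c * w i)))); last first.
  by move=> i _; ring.
rewrite -big_distrr big_split sumrB -big_distrr /= w_sum1 -/c.
by rewrite mulr1 subrr addr0 mulr1.
Qed.

Lemma expR_le_sum_expR (I : finType) (x : I -> R) i :
  expR (x i) <= \sum_j expR (x j).
Proof. by rewrite (bigD1 i) //= lerDl sumr_ge0 // => j _; rewrite expR_ge0. Qed.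

Lemma le_ln_sum_expR (I : finType) (x : I -> R) i : x i <= ln (\sum_j expR (x j)).
Proof.
rewrite -[leLHS]expRK ler_ln ?posrE ?expR_gt0 ?expR_le_sum_expR //.
exact: lt_le_trans (expR_gt0 _) (expR_le_sum_expR x i).
Qed.

Lemma ln_le_subr1 x : 0 < x -> ln x <= x - 1.
Proof. by move=> x_gt0; have := @le_ln1Dx R (x - 1); rewrite subrKC; apply; lra. Qed.

Lemma expR_ge1Dx2 y : 0 <= y -> 1 + y + y ^+ 2 / 2 <= expR y.
Proof.
move=> y_ge0; apply: le_trans (_ : series (exp_coeff y) 3 <= expR y).
  rewrite seriesEord /= !big_ord_recr big_ord0 /= /exp_coeff /=.
  by rewrite expr0 expr1 add0r !divr1.
apply: nondecreasing_cvgn_le; last exact: is_cvg_series_exp_coeff.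
apply: nondecreasing_series => n _ _.
by rewrite /exp_coeff /= divr_ge0 ?exprn_ge0.
Qed.

Lemma ln1Bx_ge x : 0 <= x -> x <= 2^-1 -> - (x + x ^+ 2) <= ln (1 - x).
Proof.
move=> x_ge0 x_le; set y := x + x ^+ 2.
have y_ge0 : 0 <= y by rewrite addr_ge0 ?sqr_ge0.
have poly_bound : 1 <= (1 - x) * (1 + y + y ^+ 2 / 2).
  have -> : (1 - x) * (1 + y + y ^+ 2 / 2) =
            1 + x ^+ 2 * (1 - x - x ^+ 2 - x ^+ 3) / 2 by rewrite /y; field.
  rewrite lerDl mulr_ge0 ?mulr_ge0 ?sqr_ge0 //.
  have x2_le : x ^+ 2 <= 4^-1 by rewrite expr2; nra.
  have x3_le : x ^+ 3 <= 8^-1 by rewrite exprS expr2; nra.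
  lra.
have exp_bound : 1 <= (1 - x) * expR y.
  by apply: le_trans poly_bound _; rewrite ler_wpM2l ?expR_ge1Dx2 //; lra.
have := exp_bound; rewrite -ler_ln ?posrE ?mulr_gt0 ?expR_gt0 //; last lra.
by rewrite ln1 lnM ?posrE ?expR_gt0 // ?expRK; lra.
Qed.

Lemma ge0_affine_near0 A B :
  (forall s, 0 < s -> s <= 1 -> 0 <= A + s * B) -> 0 <= A.
Proof.
move=> H; rewrite leNgt; apply/negP => A_lt0.
have normB_ge0 := normr_ge0 B; set D := - A + `|B| + 1.
have D_gt0 : 0 < D by rewrite /D; lra.
pose s := - A / D.
have s_gt0 : 0 < s by rewrite divr_gt0 //; lra.
have s_le1 : s <= 1 by rewrite ler_pdivrMr // mul1r /D; lra.
have sB_le : s * B <= s * `|B| by apply: ler_wpM2l; [exact: ltW | exact: ler_norm].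
have sD : s * D = - A by rewrite divfK ?gt_eqF.
have := H s s_gt0 s_le1; rewrite /D in sD; nra.
Qed.

Lemma eq0_affine_ln_near0 A B G : 0 <= G ->
  (forall s, 0 < s -> s <= 1 -> 0 <= A + s * B + ln s * G) -> G = 0.
Proof.
move=> G_ge0 H; apply/eqP; rewrite eq_le G_ge0 andbT leNgt; apply/negP => G_gt0.
pose s := expR (- ((`|A| + `|B| + 1) / G)).
have s_gt0 : 0 < s := expR_gt0 _.
have s_le1 : s <= 1.
  by rewrite /s -[leRHS]expR0 ler_expR oppr_le0 divr_ge0 // !addr_ge0.
have lns : ln s * G = - (`|A| + `|B| + 1) by rewrite expRK mulNr divfK ?gt_eqF.
have sB_le : s * B <= `|B|.
  apply: le_trans (ler_norm _) _; rewrite normrM (ger0_norm (ltW s_gt0)).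
  exact: ler_piMl (normr_ge0 B) s_le1.
have := H s s_gt0 s_le1; have := ler_norm A; lra.
Qed.

Lemma sqr_wsum_le (I : finType) (a x : I -> R) :
  (forall i, 0 <= a i) -> \sum_i a i = 1 ->
  (\sum_i a i * x i) ^+ 2 <= \sum_i a i * x i ^+ 2.
Proof.
move=> a_ge0 a_sum1; set c := \sum_i a i * x i.
have : 0 <= \sum_i a i * (x i - c) ^+ 2.
  by apply: sumr_ge0 => i _; rewrite mulr_ge0 ?sqr_ge0.
have -> : \sum_i a i * (x i - c) ^+ 2 =
          \sum_i a i * x i ^+ 2 - 2 * c * c + c ^+ 2 * \sum_i a i.
  rewrite (eq_bigr (fun i => a i * x i ^+ 2 - 2 * c * (a i * x i) + c ^+ 2 * a i)).
    by rewrite big_split sumrB /= -!big_distrr.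
  by move=> i _; ring.
by rewrite a_sum1; lra.
Qed.

End RealInequalities.

Section Frobenius.
Variables (R : realType) (p : nat).
Implicit Types (A B M X : 'M[R]_p) (u v : 'cV[R]_p).

Definition qform M u : R := (u^T *m M *m u) 0 0.

Lemma frobC A B : frob A B = frob B A.
Proof. by rewrite /frob -mxtrace_tr trmx_mul trmxK. Qed.

Lemma frob_suml I (r : seq I) (P : pred I) (F : I -> 'M[R]_p) M :
  frob (\sum_(i <- r | P i) F i) M = \sum_(i <- r | P i) frob (F i) M.
Proof. by rewrite /frob raddf_sum mulmx_suml raddf_sum. Qed.

Lemma frob_sumr I (r : seq I) (P : pred I) (F : I -> 'M[R]_p) M :
  frob M (\sum_(i <- r | P i) F i) = \sum_(i <- r | P i) frob M (F i).
Proof. by rewrite frobC frob_suml; apply: eq_bigr => i _; rewrite frobC. Qed.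

Lemma frobZl c A B : frob (c *: A) B = c * frob A B.
Proof. by rewrite /frob linearZ /= -scalemxAl mxtraceZ. Qed.

Lemma frobZr c A B : frob A (c *: B) = c * frob A B.
Proof. by rewrite frobC frobZl frobC. Qed.

Lemma frobDl A B M : frob (A + B) M = frob A M + frob B M.
Proof. by rewrite /frob linearD /= mulmxDl linearD. Qed.

Lemma frobBl A B M : frob (A - B) M = frob A M - frob B M.
Proof. by rewrite /frob linearB /= mulmxBl linearB. Qed.

Lemma frobBr A B M : frob M (A - B) = frob M A - frob M B.
Proof. by rewrite frobC frobBl !(frobC M). Qed.

Lemma frob0l M : frob 0 M = 0.
Proof. by rewrite /frob trmx0 mul0mx mxtrace0. Qed.

Lemma frob1r A : frob A 1%:M = \tr A.
Proof. by rewrite /frob mulmx1 mxtrace_tr. Qed.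

Lemma frob_dyadl M u : frob (u *m u^T) M = qform M u.
Proof.
by rewrite /frob trmx_mul trmxK -mulmxA mxtrace_mulC /mxtrace big_ord1.
Qed.

Lemma qformE M u : qform M u = frob M (u *m u^T).
Proof. by rewrite frobC frob_dyadl. Qed.

Lemma qform_dyad u v : qform (u *m u^T) v = (u^T *m v) 0 0 ^+ 2.
Proof.
rewrite /qform !mulmxA -mulmxA mxE big_ord1 expr2; congr (_ * _).
by rewrite -[v^T *m u]trmxK trmx_mul !trmxK mxE.
Qed.

Lemma qform_suml I (r : seq I) (P : pred I) (F : I -> 'M[R]_p) u :
  qform (\sum_(i <- r | P i) F i) u = \sum_(i <- r | P i) qform (F i) u.
Proof. by rewrite qformE frob_suml; apply: eq_bigr => i _; rewrite qformE. Qed.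

Lemma qformZl c M u : qform (c *: M) u = c * qform M u.
Proof. by rewrite !qformE frobZl. Qed.

Lemma qform1 u : qform 1%:M u = sqnorm u.
Proof. by rewrite /qform mulmx1. Qed.

Lemma qform_eigvec X u c : X *m u = c *: u -> qform X u = c * sqnorm u.
Proof. by move=> Xu; rewrite /qform -mulmxA Xu -scalemxAr mxE. Qed.

End Frobenius.

(* A real stand-in for the spectral decomposition of a symmetric X: a l + i b l
   is the l-th column of a unitary complex diagonaliser of X, so eigproj a b l
   is the real part of the rank-one projector onto it.  These matrices resolve
   the identity and are eigenmatrices of X, though not necessarily orthogonal
   projections. *)
Section Resolution.
Variables (R : realType) (p : nat).
Implicit Types (X : 'M[R]_p) (d : 'I_p -> R) (a b : 'I_p -> 'cV[R]_p).

Definition eigproj a b l : 'M[R]_p := a l *m (a l)^T + b l *m (b l)^T.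

Definition resolution X d a b : Prop :=
  [/\ \sum_l eigproj a b l = 1%:M,
      forall l, X *m a l = d l *: a l,
      forall l, X *m b l = d l *: b l &
      forall l, \tr (eigproj a b l) = 1].

Lemma complex_Re_sum I (r : seq I) (P : pred I) (F : I -> R[i]) :
  complex.Re (\sum_(i <- r | P i) F i) = \sum_(i <- r | P i) complex.Re (F i).
Proof. by apply: (big_morph (@complex.Re R)) => // -[x y] [z t]. Qed.

Lemma complex_Im_sum I (r : seq I) (P : pred I) (F : I -> R[i]) :
  complex.Im (\sum_(i <- r | P i) F i) = \sum_(i <- r | P i) complex.Im (F i).
Proof. by apply: (big_morph (@complex.Im R)) => // -[x y] [z t]. Qed.

Lemma complex_ReM (z w : R[i]) :
  complex.Re (z * w) = complex.Re z * complex.Re w - complex.Im z * complex.Im w.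
Proof. by case: z w => [x y] [z t]. Qed.

Lemma complex_ImM (z w : R[i]) :
  complex.Im (z * w) = complex.Re z * complex.Im w + complex.Im z * complex.Re w.
Proof. by case: z w => [x y] [z t]. Qed.

Lemma sym_resolution X : X^T = X -> exists d a b, resolution X d a b.
Proof.
move=> Xsym; pose Xc := map_mx (real_complex R) X.
have Xc_herm : Xc \is hermsymmx.
  apply/is_hermitianmxP; rewrite expr0 scale1r; apply/matrixP => i j.
  by rewrite !mxE -[in LHS]Xsym mxE; exact/esym/conjc_real.
have /orthomx_spectralP XcE := hermitian_normalmx Xc_herm.
set P := spectralmx Xc in XcE; set D := spectral_diag Xc in XcE.
have P_unitary : P \is unitarymx := spectral_unitarymx Xc.
rewrite invmx_unitary // in XcE; set V := (P ^t*)%sesqui in XcE.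
have PV : P *m V = 1%:M by apply/unitarymxP.
have VP : V *m P = 1%:M by rewrite /V -invmx_unitary // mulVmx // unitarymx_unit.
have XcV : Xc *m V = V *m diag_mx D by rewrite XcE -!mulmxA PV mulmx1.
have D_real l : complex.Im (D 0 l) = 0.
  by have /RIm_real [] := mxOverP (hermitian_spectral_diag_real Xc_herm) 0 l.
exists (fun l => complex.Re (D 0 l)), (fun l => \col_i complex.Re (V i l)),
  (fun l => \col_i complex.Im (V i l)); split.
- apply/matrixP => i j; rewrite summxE.
  have /(congr1 (fun M : 'M[R[i]]_p => complex.Re (M i j))) := VP.
  rewrite !mxE complex_Re_sum.
  have -> : complex.Re (i == j)%:R = (i == j)%:R by case: eqP.
  move=> <-.
  apply: eq_bigr => l _; rewrite !mxE !big_ord1 !mxE /=.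
  by case: (P l i) (P l j) => [x y] [z t] /=; ring.
- move=> l; apply/colP => i.
  have /(congr1 (fun M : 'M[R[i]]_p => complex.Re (M i l))) := XcV.
  rewrite mul_mx_diag !mxE complex_Re_sum complex_ReM D_real mulr0 subr0 mulrC => <-.
  by apply: eq_bigr => k _; rewrite !mxE complex_ReM /= mul0r subr0.
- move=> l; apply/colP => i.
  have /(congr1 (fun M : 'M[R[i]]_p => complex.Im (M i l))) := XcV.
  rewrite mul_mx_diag !mxE complex_Im_sum complex_ImM D_real mulr0 add0r mulrC => <-.
  by apply: eq_bigr => k _; rewrite !mxE complex_ImM /= mul0r addr0.
- move=> l; have /(congr1 (fun M : 'M[R[i]]_p => complex.Re (M l l))) := PV.
  rewrite !mxE eqxx complex_Re_sum /= => <-.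
  rewrite mxtraceD /mxtrace -big_split /=; apply: eq_bigr => i _.
  rewrite !mxE !big_ord1 !mxE.
  by case: (P l i) => [x y] /=; ring.
Qed.

End Resolution.

Section ResolutionTheory.
Variables (R : realType) (p : nat).
Implicit Types (M rho : 'M[R]_p) (u : 'cV[R]_p) (a b : 'I_p -> 'cV[R]_p).

Lemma frob_eigprojl a b l M :
  frob (eigproj a b l) M = qform M (a l) + qform M (b l).
Proof. by rewrite frobDl !frob_dyadl. Qed.

Lemma qform_eigproj_ge0 a b l u : 0 <= qform (eigproj a b l) u.
Proof.
by rewrite qformE frob_eigprojl !qform_dyad addr_ge0 ?sqr_ge0.
Qed.

Lemma frob_eigproj_ge0 a b a' b' l m :
  0 <= frob (eigproj a b l) (eigproj a' b' m).
Proof. by rewrite frob_eigprojl addr_ge0 ?qform_eigproj_ge0. Qed.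

Lemma frob_eigproj_density_ge0 a b l rho : density rho ->
  0 <= frob (eigproj a b l) rho.
Proof. by case=> _ [rho_psd _]; rewrite frob_eigprojl addr_ge0 ?rho_psd. Qed.

Lemma eigproj_sym a b l : (eigproj a b l)^T = eigproj a b l.
Proof. by rewrite linearD /= !trmx_mul !trmxK. Qed.

Section OneResolution.
Variables (X : 'M[R]_p) (d : 'I_p -> R) (a b : 'I_p -> 'cV[R]_p).
Hypothesis Xres : resolution X d a b.

Lemma sum_frob_eigproj M : \sum_l frob (eigproj a b l) M = \tr M.
Proof. by case: Xres => P1 _ _ _; rewrite -frob_suml P1 frobC frob1r. Qed.

Lemma frob_eigproj_eigval l : frob (eigproj a b l) X = d l.
Proof.
case: Xres => _ Xa Xb trP.
rewrite frob_eigprojl (qform_eigvec (Xa l)) (qform_eigvec (Xb l)) -mulrDr.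
by rewrite -!qform1 -frob_eigprojl frob1r trP mulr1.
Qed.

Lemma resolution_expr k : X ^+ k = \sum_l d l ^+ k *: eigproj a b l.
Proof.
case: Xres => P1 Xa Xb _; elim: k => [|k IHk].
  by under eq_bigr do rewrite expr0 scale1r; rewrite P1 expr0.
rewrite exprS -mulmxE IHk mulmx_sumr; apply: eq_bigr => l _.
rewrite -scalemxAr /eigproj mulmxDr !mulmxA Xa Xb -!scalemxAl -scalerDr.
by rewrite scalerA exprS mulrC.
Qed.

Lemma resolutionE : X = \sum_l d l *: eigproj a b l.
Proof.
by have := resolution_expr 1; rewrite expr1 => ->; under eq_bigr do rewrite expr1.
Qed.

Lemma mexp_resolution : mexp X = \sum_l expR (d l) *: eigproj a b l.
Proof.
apply/matrixP => i j; rewrite mxE summxE; under eq_bigr do rewrite mxE.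
apply: cvg_lim => //.
have -> : series (fun k => (X ^+ k) i j / (k`!)%:R) =
    (fun n => \sum_l series (exp_coeff (d l)) n * eigproj a b l i j).
  apply/funext => n; rewrite seriesEord /=.
  under eq_bigr do rewrite resolution_expr summxE big_distrl.
  rewrite exchange_big; apply: eq_bigr => l _.
  rewrite seriesEord /= big_distrl; apply: eq_bigr => k _.
  by rewrite !mxE /exp_coeff /=; ring.
apply: cvg_big => [|l _]; first exact: add_continuous.
by apply: cvgM; [exact: is_cvg_series_exp_coeff | exact: cvg_cst].
Qed.

Lemma tr_mexp_resolution : \tr (mexp X) = \sum_l expR (d l).
Proof.
case: Xres => _ _ _ trP; rewrite mexp_resolution raddf_sum /=.
by apply: eq_bigr => l _; rewrite mxtraceZ trP mulr1.
Qed.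

End OneResolution.

End ResolutionTheory.

Section MatrixExponential.
Variables (R : realType) (p : nat).
Implicit Types (X Z M rho : 'M[R]_p) (u : 'cV[R]_p).

Lemma frob_density_le_ln_tr_mexp X rho : X^T = X -> density rho ->
  frob X rho <= ln (\tr (mexp X)).
Proof.
move=> /sym_resolution [d [a [b Xres]]] rho_dens.
have weights_sum1 : \sum_l frob (eigproj a b l) rho = 1.
  by rewrite (sum_frob_eigproj Xres); case: rho_dens => _ [].
rewrite (tr_mexp_resolution Xres) {1}(resolutionE Xres) frob_suml.
rewrite -[leRHS]mul1r -weights_sum1 big_distrl /=; apply: ler_sum => l _.
rewrite frobZl mulrC; apply: ler_wpM2l.
  exact: frob_eigproj_density_ge0.
exact: le_ln_sum_expR.
Qed.

(* Peierls' inequality; it only uses that the eigproj a b l resolve the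
   identity with unit traces, not that they diagonalise anything. *)
Lemma sum_expR_frob_le_tr_mexp Z a b : Z^T = Z ->
  \sum_l eigproj a b l = 1%:M -> (forall l, \tr (eigproj a b l) = 1) ->
  \sum_l expR (frob (eigproj a b l) Z) <= \tr (mexp Z).
Proof.
move=> /sym_resolution [dZ [aZ [bZ Zres]]] P1 trP; have [PZ1 _ _ trPZ] := Zres.
pose W l m := frob (eigproj a b l) (eigproj aZ bZ m).
have W_row l : \sum_m W l m = 1 by rewrite -frob_sumr PZ1 frob1r trP.
have W_col m : \sum_l W l m = 1.
  by rewrite /W -frob_suml P1 frobC frob1r trPZ.
rewrite (tr_mexp_resolution Zres) {1}(resolutionE Zres).
apply: (@le_trans _ _ (\sum_l \sum_m W l m * expR (dZ m))).
  apply: ler_sum => l _; rewrite frob_sumr.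
  under eq_bigr do rewrite frobZr mulrC.
  exact: jensen_expR (fun m => frob_eigproj_ge0 _ _ _ _ l m) (W_row l).
by rewrite exchange_big /=; under eq_bigr do rewrite -big_distrl /= W_col mul1r.
Qed.

Lemma qform_density_le rho u : density rho -> qform rho u <= sqnorm u.
Proof.
move=> rho_dens; have [rho_sym [_ tr_rho]] := rho_dens.
have [d [a [b rho_res]]] := sym_resolution rho_sym; have [P1 _ _ _] := rho_res.
have d_ge0 l : 0 <= d l.
  by rewrite -(frob_eigproj_eigval rho_res) frob_eigproj_density_ge0.
have d_le1 l : d l <= 1.
  rewrite -tr_rho -(sum_frob_eigproj rho_res).
  under eq_bigr do rewrite (frob_eigproj_eigval rho_res).
  by rewrite (bigD1 l) //= lerDl sumr_ge0.
rewrite -qform1 -P1 {1}(resolutionE rho_res) !qform_suml; apply: ler_sum => l _.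
by rewrite qformZl ler_piMl ?qform_eigproj_ge0.
Qed.

Lemma tr_mexp0 : \tr (mexp (0 : 'M[R]_p)) = p%:R.
Proof.
have [d [a [b res0]]] := sym_resolution (@trmx0 R p p).
have d0 l : d l = 0 by rewrite -(frob_eigproj_eigval res0) frobC frob0l.
rewrite (tr_mexp_resolution res0).
by under eq_bigr do rewrite d0 expR0; rewrite sumr_const card_ord.
Qed.

Lemma mexp_sym X : X^T = X -> (mexp X)^T = mexp X.
Proof.
move=> /sym_resolution [d [a [b Xres]]]; rewrite (mexp_resolution Xres) raddf_sum /=.
by apply: eq_bigr => l _; rewrite linearZ /= eigproj_sym.
Qed.

Definition gibbs_state X := (\tr (mexp X))^-1 *: mexp X.

Hypothesis p_gt0 : (0 < p)%N.

Lemma tr_mexp_gt0 X : X^T = X -> 0 < \tr (mexp X).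
Proof.
move=> /sym_resolution [d [a [b Xres]]]; rewrite (tr_mexp_resolution Xres).
exact: lt_le_trans (expR_gt0 _) (expR_le_sum_expR d (Ordinal p_gt0)).
Qed.

Lemma ln_tr_mexpB_le X Z : X^T = X -> Z^T = Z ->
  ln (\tr (mexp X)) - ln (\tr (mexp Z)) <= frob (X - Z) (mexp X) / \tr (mexp X).
Proof.
move=> Xsym Zsym; have S_gt0 := tr_mexp_gt0 Xsym.
have [d [a [b Xres]]] := sym_resolution Xsym; have [P1 _ _ trP] := Xres.
set S := \tr (mexp X) in S_gt0 *.
pose y l := frob (eigproj a b l) (X - Z).
pose q l := expR (d l) / S.
have q_ge0 l : 0 <= q l by rewrite divr_ge0 ?expR_ge0 ?ltW.
have q_sum1 : \sum_l q l = 1.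
  by rewrite -big_distrl /= -(tr_mexp_resolution Xres) mulfV ?gt_eqF.
have frob_avg : frob (X - Z) (mexp X) / S = \sum_l q l * y l.
  rewrite frobC (mexp_resolution Xres) frob_suml big_distrl; apply: eq_bigr => l _.
  by rewrite frobZl /q /y mulrAC.
have frob_eigprojZ l : frob (eigproj a b l) Z = d l - y l.
  by rewrite /y frobBr (frob_eigproj_eigval Xres); ring.
have key : S * expR (- (frob (X - Z) (mexp X) / S)) <= \tr (mexp Z).
  apply: le_trans (sum_expR_frob_le_tr_mexp Zsym P1 trP).
  rewrite frob_avg -sumrN.
  under eq_bigr do rewrite -mulrN.
  apply: le_trans (ler_wpM2l (ltW S_gt0) (jensen_expR _ q_ge0 q_sum1)) _.
  rewrite big_distrr /=; apply: ler_sum => l _.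
  by rewrite frob_eigprojZ expRD /q mulrA mulrCA divff ?gt_eqF // mulr1.
have lhs_gt0 : 0 < S * expR (- (frob (X - Z) (mexp X) / S)).
  by rewrite mulr_gt0 ?expR_gt0.
have := key; rewrite -ler_ln ?posrE //; last exact: lt_le_trans key.
by rewrite lnM ?posrE ?expR_gt0 // expRK; lra.
Qed.

Lemma gibbs_state_density X : X^T = X -> density (gibbs_state X).
Proof.
move=> Xsym; have [d [a [b Xres]]] := sym_resolution Xsym.
have S_gt0 := tr_mexp_gt0 Xsym.
split; [|split].
- by rewrite linearZ /= mexp_sym.
- move=> u; rewrite -/(qform _ u) qformZl.
  apply: mulr_ge0; first by rewrite invr_ge0 ltW.
  rewrite (mexp_resolution Xres) qform_suml; apply: sumr_ge0 => l _.
  by rewrite qformZl mulr_ge0 ?expR_ge0 ?qform_eigproj_ge0.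
- by rewrite mxtraceZ mulVf ?gt_eqF.
Qed.

Lemma scaled_sum_sym (S : nat -> 'M[R]_p) c m n : (forall t, (S t)^T = S t) ->
  (c *: \sum_(m <= t < n) S t)^T = c *: \sum_(m <= t < n) S t.
Proof.
move=> S_sym; rewrite linearZ /= raddf_sum /=; congr (_ *: _).
by apply: eq_bigr => t _; rewrite S_sym.
Qed.

Lemma mmw_regret (S : nat -> 'M[R]_p) (eta : R) T rho :
  (forall t, (S t)^T = S t) -> 0 < eta -> density rho ->
  \sum_(1 <= t < T.+1) frob (S t) rho <=
  \sum_(1 <= t < T.+1) frob (S t) (gibbs_state (eta *: \sum_(1 <= s < t.+1) S s))
  + ln p%:R / eta.
Proof.
move=> S_sym eta_gt0 rho_dens.
pose X t := eta *: \sum_(1 <= s < t.+1) S s.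
have X_sym t : (X t)^T = X t := scaled_sum_sym _ _ _ S_sym.
have step t : ln (\tr (mexp (X t.+1))) - ln (\tr (mexp (X t))) <=
              eta * frob (S t.+1) (gibbs_state (X t.+1)).
  have -> : eta * frob (S t.+1) (gibbs_state (X t.+1)) =
            frob (X t.+1 - X t) (mexp (X t.+1)) / \tr (mexp (X t.+1)).
    rewrite /X big_nat_recr //= scalerDr addrAC subrr add0r.
    by rewrite frobZl frobZr mulrCA mulrC.
  exact: ln_tr_mexpB_le.
have telescope t : ln (\tr (mexp (X t))) - ln p%:R <=
    eta * \sum_(1 <= s < t.+1) frob (S s) (gibbs_state (X s)).
  elim: t => [|t IHt].
    by rewrite big_geq // mulr0 /X big_geq // scaler0 tr_mexp0 subrr.
  by rewrite big_nat_recr //= mulrDr; have := step t; lra.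
have gibbs := frob_density_le_ln_tr_mexp (X_sym T) rho_dens.
rewrite /X frobZl frob_suml in gibbs.
rewrite -(ler_pM2l eta_gt0) mulrDr mulrCA divff ?gt_eqF // mulr1.
by have := telescope T; rewrite /X; lra.
Qed.

End MatrixExponential.

Section KLTerm.
Variable R : realType.
Implicit Types c r s x y : R.

Definition klterm c x : R := if x == 0 then 0 else x * ln (x / c).

Lemma ln_div_split c x y : 0 < c -> 0 < x -> 0 < y ->
  ln (y / c) = ln (y / x) + ln (x / c).
Proof. by move=> *; rewrite -lnM ?posrE ?divr_gt0 // mulrA divfK ?gt_eqF. Qed.

Lemma RE_klterm N (v c : 'I_N -> R) : RE v c = \sum_n klterm (c n) (v n).
Proof. by []. Qed.

Lemma sub_le_klterm c x : 0 < c -> 0 <= x -> x - c <= klterm c x.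
Proof.
move=> c_gt0 x_ge0; rewrite /klterm; have [->|x_neq0] := eqVneq x 0.
  by rewrite sub0r oppr_le0 ltW.
have x_gt0 : 0 < x by rewrite lt_neqAle eq_sym x_neq0.
have -> : ln (x / c) = - ln (c / x) by rewrite -lnV ?posrE ?divr_gt0 // invf_div.
have := ler_wpM2l (ltW x_gt0) (ln_le_subr1 (divr_gt0 c_gt0 x_gt0)).
by rewrite mulrBr mulrCA divff ?gt_eqF // mulr1 mulr1; lra.
Qed.

Lemma klterm_sub_le c x y : 0 < c -> 0 < x -> 0 <= y ->
  klterm c y - klterm c x <= (y - x) * (ln (x / c) + 1) + (y - x) ^+ 2 / x.
Proof.
move=> c_gt0 x_gt0 y_ge0; rewrite /klterm (gt_eqF x_gt0).
have [->|y_neq0] := eqVneq y 0.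
  have -> : (0 - x) ^+ 2 / x = x by field; rewrite gt_eqF.
  lra.
have y_gt0 : 0 < y by rewrite lt_neqAle eq_sym y_neq0.
rewrite (ln_div_split c_gt0 x_gt0 y_gt0).
have : y * ln (y / x) <= y * (y / x - 1).
  by apply: ler_wpM2l; [exact: ltW | exact: ln_le_subr1 (divr_gt0 y_gt0 x_gt0)].
have -> : y * (y / x - 1) = (y - x) ^+ 2 / x + (y - x) by field; rewrite gt_eqF.
lra.
Qed.

Lemma kltermZ c s y : 0 < c -> 0 < s -> 0 <= y ->
  klterm c (s * y) = s * klterm c y + s * ln s * y.
Proof.
move=> c_gt0 s_gt0 y_ge0; rewrite /klterm mulf_eq0 (gt_eqF s_gt0) /=.
have [->|y_neq0] := eqVneq y 0; first by rewrite !mulr0 addr0.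
have y_gt0 : 0 < y by rewrite lt_neqAle eq_sym y_neq0.
by rewrite -[s * y / c]mulrA lnM ?posrE ?divr_gt0 //; ring.
Qed.

Lemma klterm_mulr c r x : 0 < c -> 0 < r -> 0 <= x ->
  klterm (c * r) x = klterm c x - x * ln r.
Proof.
move=> c_gt0 r_gt0 x_ge0; rewrite /klterm; have [->|x_neq0] := eqVneq x 0.
  by rewrite mul0r subr0.
have x_gt0 : 0 < x by rewrite lt_neqAle eq_sym x_neq0.
by rewrite invfM mulrA [ln (x / c / r)]ln_div ?posrE ?divr_gt0 //; ring.
Qed.

Lemma klterm_three_point c x y : 0 < c -> 0 < x -> 0 <= y ->
  klterm c y - klterm c x - klterm x y = (y - x) * ln (x / c).
Proof.
move=> c_gt0 x_gt0 y_ge0; rewrite /klterm (gt_eqF x_gt0).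
have [->|y_neq0] := eqVneq y 0; first by ring.
have y_gt0 : 0 < y by rewrite lt_neqAle eq_sym y_neq0.
by rewrite (ln_div_split c_gt0 x_gt0 y_gt0); ring.
Qed.

Lemma klterm0 c : klterm c 0 = 0.
Proof. by rewrite /klterm eqxx. Qed.

Lemma RE_ge0 (N : nat) (v w : 'I_N -> R) :
  \sum_n v n = 1 -> \sum_n w n = 1 -> (forall n, 0 <= v n) -> (forall n, 0 < w n) ->
  0 <= RE v w.
Proof.
move=> v_sum1 w_sum1 v_ge0 w_gt0.
have : \sum_n (v n - w n) <= RE v w.
  by rewrite RE_klterm; apply: ler_sum => n _; exact: sub_le_klterm.
by rewrite sumrB v_sum1 w_sum1 subrr.
Qed.

End KLTerm.

Section REMinimizer.
Variables (R : realType) (N : nat) (K : ('I_N -> R) -> Prop).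
Hypothesis K_convex : forall u v s, K u -> K v -> 0 <= s -> s <= 1 ->
  K (fun n => u n + s * (v n - u n)).
Hypothesis K_prob : forall v, K v -> \sum_n v n = 1 /\ forall n, 0 <= v n.

Definition RE_minimizer (c w : 'I_N -> R) : Prop :=
  K w /\ forall u, K u -> RE w c <= RE u c.

Variables (c w : 'I_N -> R).
Hypothesis c_gt0 : forall n, 0 < c n.
Hypothesis w_min : RE_minimizer c w.

(* Optimality of w against w + s (v - w), divided by s; the [ln s] term
   collects the coordinates where w vanishes. *)
Lemma RE_minimizer_variation v s : K v -> 0 < s -> s <= 1 ->
  0 <= \sum_n (if w n == 0 then klterm (c n) (v n)
               else (v n - w n) * (ln (w n / c n) + 1))
       + s * \sum_n (if w n == 0 then 0 else (v n - w n) ^+ 2 / w n)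
       + ln s * \sum_n (if w n == 0 then v n else 0).
Proof.
move=> vK s_gt0 s_le1; have [wK w_opt] := w_min.
have [_ w_ge0] := K_prob wK; have [_ v_ge0] := K_prob vK.
pose u n := w n + s * (v n - w n).
have uK : K u by apply: K_convex => //; exact: ltW.
have [_ u_ge0] := K_prob uK.
have term n : klterm (c n) (u n) - klterm (c n) (w n) <=
    s * (if w n == 0 then klterm (c n) (v n)
         else (v n - w n) * (ln (w n / c n) + 1))
    + s ^+ 2 * (if w n == 0 then 0 else (v n - w n) ^+ 2 / w n)
    + s * ln s * (if w n == 0 then v n else 0).
  have [wn0|wn_neq0] := eqVneq (w n) 0.
    rewrite /u wn0 subr0 add0r (kltermZ (c_gt0 n) s_gt0 (v_ge0 n)) klterm0.
    by rewrite mulr0 addr0 subr0.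
  have wn_gt0 : 0 < w n by rewrite lt_neqAle eq_sym wn_neq0 w_ge0.
  apply: le_trans (klterm_sub_le (c_gt0 n) wn_gt0 (u_ge0 n)) _.
  rewrite le_eqVlt; apply/predU1l; rewrite /u; field.
  by rewrite gt_eqF.
rewrite -(pmulr_rge0 _ s_gt0) mulrDr mulrDr !mulrA -expr2 !big_distrr -!big_split /=.
apply: le_trans _ (ler_sum _ (fun n _ => term n)).
by rewrite sumrB subr_ge0; exact: w_opt u uK.
Qed.

Lemma RE_minimizer_support v n : K v -> w n = 0 -> v n = 0.
Proof.
move=> vK wn0; have [_ v_ge0] := K_prob vK.
have G_ge0 i : true -> 0 <= if w i == 0 then v i else 0 by case: ifP.
have G0 := eq0_affine_ln_near0 (sumr_ge0 _ G_ge0)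
  (fun s s_gt0 s_le1 => RE_minimizer_variation vK s_gt0 s_le1).
by have := psumr_eq0P G_ge0 G0 (i := n) isT; rewrite wn0 eqxx.
Qed.

Lemma RE_minimizer_gt0 : (exists2 v, K v & forall n, 0 < v n) -> forall n, 0 < w n.
Proof.
case=> v vK v_gt0 n; have [_ w_ge0] := K_prob (proj1 w_min).
rewrite lt_neqAle w_ge0 andbT eq_sym; apply/eqP => wn0.
by have := v_gt0 n; rewrite (RE_minimizer_support vK wn0) ltxx.
Qed.

Lemma RE_minimizer_pythagoras v : (forall n, 0 < w n) -> K v ->
  RE v w <= RE v c - RE w c.
Proof.
move=> w_gt0 vK; have [v_sum1 v_ge0] := K_prob vK.
have [w_sum1 _] := K_prob (proj1 w_min).
have wn_neq0 n : (w n == 0) = false by rewrite gt_eqF.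
have A_ge0 : 0 <= \sum_n (v n - w n) * (ln (w n / c n) + 1).
  apply: ge0_affine_near0 => s s_gt0 s_le1.
  have := RE_minimizer_variation vK s_gt0 s_le1.
  under eq_bigr do rewrite wn_neq0.
  under [in ln s * _]eq_bigr do rewrite wn_neq0.
  by rewrite big1_eq mulr0 addr0; apply.
have A_eq : \sum_n (v n - w n) * (ln (w n / c n) + 1) = RE v c - RE w c - RE v w.
  under eq_bigr do rewrite mulrDr mulr1.
  rewrite big_split /= sumrB v_sum1 w_sum1 subrr addr0 !RE_klterm -!sumrB.
  by apply: eq_bigr => n _; rewrite (klterm_three_point (c_gt0 n) (w_gt0 n) (v_ge0 n)).
by rewrite A_eq in A_ge0; lra.
Qed.

End REMinimizer.

Section MultiplicativeWeights.
Variables (R : realType) (N : nat) (K : ('I_N -> R) -> Prop).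
Hypothesis K_convex : forall u v s, K u -> K v -> 0 <= s -> s <= 1 ->
  K (fun n => u n + s * (v n - u n)).
Hypothesis K_prob : forall v, K v -> \sum_n v n = 1 /\ forall n, 0 <= v n.
Hypothesis K_pos : exists2 v, K v & forall n, 0 < v n.
Variables (eta L : R).
Hypotheses (eta_gt0 : 0 < eta) (eta_L_le : eta * L <= 2^-1).

Lemma scaled_loss_bound x : 0 <= x <= L -> 0 <= eta * x <= 2^-1.
Proof.
case/andP=> x_ge0 x_le; apply/andP; split; first by rewrite mulr_ge0 // ltW.
by apply: le_trans _ eta_L_le; apply: ler_wpM2l => //; exact: ltW.
Qed.

Lemma mw_update_gt0 (wt m : 'I_N -> R) n :
  0 < wt n -> 0 <= m n <= L -> 0 < wt n * (1 - eta * m n).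
Proof.
move=> wt_gt0 /scaled_loss_bound /andP[_ x_le].
by rewrite mulr_gt0 // subr_gt0 (le_lt_trans x_le) // invf_lt1 ?ltr1n.
Qed.

Lemma mw_step (wt m w' v : 'I_N -> R) :
  K wt -> (forall n, 0 < wt n) -> (forall n, 0 <= m n <= L) ->
  RE_minimizer K (fun n => wt n * (1 - eta * m n)) w' -> K v ->
  RE v w' <= RE v wt + eta * (1 + eta * L) * \sum_n m n * v n
             - eta * \sum_n m n * wt n.
Proof.
move=> wtK wt_gt0 m_bound w'_min vK.
have [wt_sum1 _] := K_prob wtK; have [_ v_ge0] := K_prob vK.
have [w'_sum1 w'_ge0] := K_prob (proj1 w'_min).
have c_gt0 n := mw_update_gt0 (wt_gt0 n) (m_bound n).
have w'_gt0 := RE_minimizer_gt0 K_convex K_prob c_gt0 w'_min K_pos.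
have pyth := RE_minimizer_pythagoras K_convex K_prob c_gt0 w'_min w'_gt0 vK.
have RE_w' : eta * \sum_n m n * wt n <= RE w' (fun n => wt n * (1 - eta * m n)).
  have sum_eq : \sum_n (w' n - wt n * (1 - eta * m n)) = eta * \sum_n m n * wt n.
    rewrite (eq_bigr (fun n => w' n - wt n + eta * (m n * wt n))); last first.
      by move=> n _; ring.
    by rewrite big_split /= sumrB w'_sum1 wt_sum1 subrr add0r big_distrr.
  by rewrite -sum_eq RE_klterm; apply: ler_sum => n _; exact: sub_le_klterm.
have RE_v : RE v (fun n => wt n * (1 - eta * m n)) <=
            RE v wt + eta * (1 + eta * L) * \sum_n m n * v n.
  rewrite !RE_klterm big_distrr -big_split /=; apply: ler_sum => n _.
  have /andP[x_ge0 x_le] := scaled_loss_bound (m_bound n).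
  have /andP[m_ge0 m_le] := m_bound n.
  rewrite klterm_mulr ?wt_gt0 ?subr_gt0 ?(le_lt_trans x_le) ?invf_lt1 ?ltr1n //.
  have ln_bound : - (v n * ln (1 - eta * m n)) <=
                  v n * (eta * m n + (eta * m n) ^+ 2).
    by rewrite -mulrN; apply: ler_wpM2l => //; rewrite lerNl ln1Bx_ge.
  have sq_bound : v n * (eta * m n) ^+ 2 <= v n * (eta * m n) * (eta * L).
    rewrite expr2 mulrA; apply: ler_wpM2l; first by rewrite mulr_ge0.
    by apply: ler_wpM2l => //; exact: ltW.
  lra.
lra.
Qed.

Variables (T : nat) (w m : nat -> 'I_N -> R).
Hypotheses (w1K : K (w 1%N)) (w1_gt0 : forall n, 0 < w 1%N n).
Hypothesis m_bound : forall t, (1 <= t <= T)%N -> forall n, 0 <= m t n <= L.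
Hypothesis w_update : forall t, (1 <= t <= T)%N ->
  RE_minimizer K (fun n => w t n * (1 - eta * m t n)) (w t.+1).

Lemma mw_weights t : (1 <= t <= T.+1)%N -> K (w t) /\ forall n, 0 < w t n.
Proof.
elim: t => [//|t IHt] /andP[_ tT]; have [->|t_gt0] := posnP t; first by split.
have t_run : (1 <= t <= T)%N by rewrite t_gt0 -ltnS.
have [wtK wt_gt0] : K (w t) /\ forall n, 0 < w t n by apply: IHt; rewrite t_gt0 ltnW.
split; first exact: proj1 (w_update t_run).
apply: RE_minimizer_gt0 (w_update t_run) K_pos => // n.
exact: mw_update_gt0 (wt_gt0 n) (m_bound t_run n).
Qed.

Lemma mw_regret v : K v ->
  \sum_(1 <= t < T.+1) \sum_n m t n * w t n <=
    (1 + eta * L) * \sum_(1 <= t < T.+1) \sum_n m t n * v n + RE v (w 1%N) / eta.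
Proof.
move=> vK.
have telescope t : (t <= T)%N ->
    eta * \sum_(1 <= s < t.+1) \sum_n m s n * w s n + RE v (w t.+1) <=
    RE v (w 1%N) + eta * (1 + eta * L) * \sum_(1 <= s < t.+1) \sum_n m s n * v n.
  elim: t => [_|t IHt tT]; first by rewrite !big_geq // !mulr0 add0r addr0.
  have t_run : (1 <= t.+1 <= T)%N by [].
  have [wtK wt_gt0] : K (w t.+1) /\ forall n, 0 < w t.+1 n.
    by apply: mw_weights; rewrite !ltnS (ltnW tT).
  have := mw_step wtK wt_gt0 (m_bound t_run) (w_update t_run) vK.
  by have := IHt (ltnW tT); rewrite !(big_nat_recr t.+1) //= !mulrDr; lra.
have [wTK wT_gt0] : K (w T.+1) /\ forall n, 0 < w T.+1 n.
  by apply: mw_weights; rewrite leqnn.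
have [v_sum1 v_ge0] := K_prob vK; have [wT_sum1 _] := K_prob wTK.
rewrite -(ler_pM2l eta_gt0) mulrDr [X in _ + X]mulrC divfK ?gt_eqF // mulrA.
have := RE_ge0 v_sum1 wT_sum1 v_ge0 wT_gt0; have := telescope T (leqnn T); lra.
Qed.

End MultiplicativeWeights.

Section CappedSimplex.
Variables (R : realType) (N : nat) (eps : R).
Implicit Types u v : 'I_N -> R.

Lemma capped_simplex_prob v :
  capped_simplex eps v -> \sum_n v n = 1 /\ forall n, 0 <= v n.
Proof. by case=> v_sum1 v_box; split=> // n; case: (v_box n). Qed.

Lemma capped_simplex_convex u v s :
  capped_simplex eps u -> capped_simplex eps v -> 0 <= s -> s <= 1 ->
  capped_simplex eps (fun n => u n + s * (v n - u n)).
Proof.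
move=> [u_sum1 u_box] [v_sum1 v_box] s_ge0 s_le1; split.
  by rewrite big_split /= -big_distrr /= sumrB u_sum1 v_sum1 subrr mulr0 addr0.
move=> n; have [u_ge0 u_le] := u_box n; have [v_ge0 v_le] := v_box n.
have -> : u n + s * (v n - u n) = (1 - s) * u n + s * v n by ring.
split; first by rewrite addr_ge0 // mulr_ge0 // subr_ge0.
set cap := ((1 - eps) * N%:R)^-1 in u_le v_le *.
have -> : cap = (1 - s) * cap + s * cap by ring.
by apply: lerD; apply: ler_wpM2l; rewrite ?subr_ge0.
Qed.

Hypotheses (N_gt0 : (0 < N)%N) (eps_ge0 : 0 <= eps) (eps_lt1 : eps < 1).

Lemma capped_simplex_uniform : capped_simplex eps (fun _ : 'I_N => (N%:R : R)^-1).
Proof.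
have N_pos : 0 < N%:R :> R by rewrite ltr0n.
split; first by rewrite sumr_const card_ord -[X in X = _]mulr_natr mulVf ?gt_eqF.
move=> n; split; first by rewrite invr_ge0 ltW.
rewrite lef_pV2 ?posrE ?mulr_gt0 ?subr_gt0 //.
by apply: ler_piMl; [exact: ltW | rewrite lerBlDr lerDl].
Qed.

Lemma RE_uniform_le v : capped_simplex eps v ->
  RE v (fun=> (N%:R : R)^-1) <= ln ((1 - eps)^-1).
Proof.
move=> [v_sum1 v_box]; have N_pos : 0 < N%:R :> R by rewrite ltr0n.
have -> : ln ((1 - eps)^-1) = \sum_n v n * ln ((1 - eps)^-1).
  by rewrite -big_distrl /= v_sum1 mul1r.
apply: ler_sum => n _.
have [v_ge0 v_le] := v_box n; rewrite /klterm.
have [->|vn_neq0] := eqVneq (v n) 0; first by rewrite mul0r.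
have vn_gt0 : 0 < v n by rewrite lt_neqAle eq_sym vn_neq0.
apply: ler_wpM2l; first exact: ltW.
rewrite ler_ln ?posrE ?divr_gt0 ?invr_gt0 ?subr_gt0 // invrK.
by move: v_le; rewrite invfM ler_pdivlMr.
Qed.

End CappedSimplex.

Section SquaredNorm.
Variables (R : realType) (p : nat).

Lemma sqnormE (x : 'cV[R]_p) : sqnorm x = \sum_k x k 0 ^+ 2.
Proof. by rewrite /sqnorm mxE; apply: eq_bigr => k _; rewrite mxE expr2. Qed.

Lemma sqnorm_wsum_le (I : finType) (a : I -> R) (x : I -> 'cV[R]_p) :
  (forall i, 0 <= a i) -> \sum_i a i = 1 ->
  sqnorm (\sum_i a i *: x i) <= \sum_i a i * sqnorm (x i).
Proof.
move=> a_ge0 a_sum1; rewrite sqnormE.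
under [leRHS]eq_bigr do rewrite sqnormE big_distrr.
rewrite exchange_big; apply: ler_sum => k _.
rewrite summxE (eq_bigr (fun i => a i * x i k 0)) => [|i _]; last by rewrite mxE.
exact: sqr_wsum_le.
Qed.

End SquaredNorm.

Section Diameter.
Variables (R : realType) (N p : nat) (g : 'I_N -> 'cV[R]_p).

Lemma nu_ge0 : 0 <= nu g.
Proof. exact: bigmax_ge_id. Qed.

Lemma sqnorm_le_nu i j : sqnorm (g i - g j) <= nu g.
Proof.
apply: le_trans (le_bigmax _ _ i).
exact: (le_bigmax _ (fun j => sqnorm (g i - g j)) j).
Qed.

Lemma sqnorm_zvec_le_nu mu n : in_conv g mu -> sqnorm (zvec g mu n) <= nu g.
Proof.
move=> [lam [lam_ge0 [lam_sum1 ->]]].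
have -> : zvec g (\sum_j lam j *: g j) n = \sum_j lam j *: (g n - g j).
  rewrite /zvec (eq_bigr _ (fun j _ => scalerBr _ _ _)) sumrB -scaler_suml.
  by rewrite lam_sum1 scale1r.
apply: le_trans (sqnorm_wsum_le _ lam_ge0 lam_sum1) _.
rewrite -[leRHS]mul1r -lam_sum1 big_distrl /=; apply: ler_sum => j _.
by rewrite ler_wpM2l ?sqnorm_le_nu.
Qed.

End Diameter.

Section MWMMWRounds.
Variables (R : realType) (N p T : nat) (eps : R) (g : 'I_N -> 'cV[R]_p).
Variables (mu : 'cV[R]_p) (eta_rho eta_w : R) (w : nat -> 'I_N -> R).

Lemma Smat_sym v : (Smat g mu v)^T = Smat g mu v.
Proof.
rewrite raddf_sum /=; apply: eq_bigr => n _.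
by rewrite linearZ /= trmx_mul trmxK.
Qed.

Lemma frob_Smat v M : frob (Smat g mu v) M = \sum_n v n * qform M (zvec g mu n).
Proof. by rewrite frob_suml; apply: eq_bigr => n _; rewrite frobZl frob_dyadl. Qed.

Hypotheses (p_gt0 : (0 < p)%N) (mu_conv : in_conv g mu).

Lemma lossvec_bound t n : 0 <= lossvec g mu eta_rho w t n <= nu g.
Proof.
have rho_dens := gibbs_state_density p_gt0
  (scaled_sum_sym eta_rho 1 t.+1 (fun s => Smat_sym (w s))).
have [_ [rho_psd _]] := rho_dens.
apply/andP; split; first exact: rho_psd.
exact: le_trans (qform_density_le _ rho_dens) (sqnorm_zvec_le_nu n mu_conv).
Qed.

Hypotheses (N_gt0 : (0 < N)%N) (eps_ge0 : 0 <= eps) (eps_lt1 : eps < 1).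
Hypotheses (w1K : capped_simplex eps (w 1%N)) (w1_gt0 : forall n, 0 < w 1%N n).
Hypotheses (eta_rho_gt0 : 0 < eta_rho) (eta_w_gt0 : 0 < eta_w).
Hypothesis eta_w_nu_le : eta_w * nu g <= 2^-1.
Hypothesis run : mwmmw_run g mu eps eta_rho eta_w T w.

Lemma mwmmw_regret v rho : capped_simplex eps v -> density rho ->
  \sum_(1 <= t < T.+1) frob (Smat g mu (w t)) rho <=
    (1 + eta_rho * nu g) * (1 + eta_w * nu g) *
      \sum_(1 <= t < T.+1) \sum_n lossvec g mu eta_rho w t n * v n
    + (1 + eta_rho * nu g) * RE v (w 1%N) / eta_w
    + ln p%:R / eta_rho.
Proof.
move=> vK rho_dens; set m := lossvec g mu eta_rho w.
have K_pos : exists2 u : 'I_N -> R, capped_simplex eps u & forall n, 0 < u n.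
  exists (fun _ : 'I_N => (N%:R : R)^-1); first exact: capped_simplex_uniform.
  by move=> n; rewrite invr_gt0 ltr0n.
have m_bound : forall t, (1 <= t <= T)%N -> forall n, 0 <= m t n <= nu g.
  by move=> t _; exact: lossvec_bound.
have K_convex := @capped_simplex_convex R N eps.
have K_prob := @capped_simplex_prob R N eps.
have mw := mw_regret K_convex K_prob K_pos eta_w_gt0 eta_w_nu_le w1K w1_gt0
  m_bound run vK.
have mmw := @mmw_regret R p p_gt0 (fun t => Smat g mu (w t)) eta_rho T rho
  (fun t => Smat_sym (w t)) eta_rho_gt0 rho_dens.
have own_loss : \sum_(1 <= t < T.+1) frob (Smat g mu (w t)) (rhomat g mu eta_rho w t) =
              \sum_(1 <= t < T.+1) \sum_n m t n * w t n.
  by apply: eq_bigr => t _; rewrite frob_Smat; apply: eq_bigr => n _; rewrite mulrC.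
have own_loss_ge0 : 0 <= \sum_(1 <= t < T.+1) \sum_n m t n * w t n.
  rewrite big_nat_cond; apply: sumr_ge0 => t /andP[/andP[t_gt0 t_le] _].
  have [_ wt_gt0] : capped_simplex eps (w t) /\ forall n, 0 < w t n.
    apply: (mw_weights K_convex K_prob K_pos eta_w_gt0 eta_w_nu_le w1K w1_gt0
      m_bound run).
    by rewrite t_gt0 ltnW.
  apply: sumr_ge0 => n _; apply: mulr_ge0; last exact: ltW.
  by case/andP: (lossvec_bound t n).
rewrite own_loss in mmw.
(* The density player's bound loses no multiplicative factor, so the factor
   1 + eta_rho * nu g of the statement is slack. *)
have a_ge0 : 0 <= eta_rho * nu g := mulr_ge0 (ltW eta_rho_gt0) (nu_ge0 g).
have := ler_wpM2l (addr_ge0 ler01 a_ge0) mw.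
have : \sum_(1 <= t < T.+1) \sum_n m t n * w t n <=
       (1 + eta_rho * nu g) * \sum_(1 <= t < T.+1) \sum_n m t n * w t n.
  by rewrite ler_peMl // lerDl.
lra.
Qed.

End MWMMWRounds.

Unset Implicit Arguments.

Theorem mainTheorem5 (R : realType) (N p T : nat) (eps : R)
  (g : 'I_N -> 'cV[R]_p) (mu : 'cV[R]_p) (eta_rho eta_w : R)
  (w : nat -> 'I_N -> R) :
  (1 <= N)%N -> (1 <= p)%N -> (1 <= T)%N -> 0 <= eps -> eps < 1 ->
  in_conv g mu ->
  capped_simplex eps (w 1%N) -> (forall n, 0 < w 1%N n) ->
  0 < eta_rho * nu g -> eta_rho * nu g <= 2^-1 ->
  0 < eta_w * nu g -> eta_w * nu g <= 2^-1 ->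
  mwmmw_run g mu eps eta_rho eta_w T w ->
  (forall (v : 'I_N -> R) (rho : 'M[R]_p),
     capped_simplex eps v -> density rho ->
     \sum_(1 <= t < T.+1) frob (Smat g mu (w t)) rho <=
       (1 + eta_rho * nu g) * (1 + eta_w * nu g) *
         \sum_(1 <= t < T.+1) \sum_(n < N) lossvec g mu eta_rho w t n * v n
       + (1 + eta_rho * nu g) * RE v (w 1%N) / eta_w
       + ln (p%:R) / eta_rho)
  /\
  ((forall n, w 1%N n = (N%:R)^-1) ->
   forall (v : 'I_N -> R) (rho : 'M[R]_p),
     capped_simplex eps v -> density rho ->
     \sum_(1 <= t < T.+1) frob (Smat g mu (w t)) rho <=
       (1 + eta_rho * nu g) * (1 + eta_w * nu g) *
         \sum_(1 <= t < T.+1) \sum_(n < N) lossvec g mu eta_rho w t n * v n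
       + (1 + eta_rho * nu g) * ln ((1 - eps)^-1) / eta_w
       + ln (p%:R) / eta_rho).
Proof.
move=> N_gt0 p_gt0 _ eps_ge0 eps_lt1 mu_conv w1K w1_gt0 rho_nu_gt0 _ w_nu_gt0 w_nu_le.
move=> run.
have nu_ge0 := nu_ge0 g.
have eta_rho_gt0 : 0 < eta_rho by nra.
have eta_w_gt0 : 0 < eta_w by nra.
have regret := mwmmw_regret p_gt0 mu_conv N_gt0 eps_ge0 eps_lt1 w1K w1_gt0
  eta_rho_gt0 eta_w_gt0 w_nu_le run.
split=> [|w1_uniform] v rho vK rho_dens; first exact: regret.
apply: le_trans (regret v rho vK rho_dens) _.
rewrite lerD2r lerD2l; apply: ler_wpM2r; first by rewrite invr_ge0 ltW.
apply: ler_wpM2l; first exact: addr_ge0 ler01 (ltW rho_nu_gt0).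
have -> : w 1%N = fun=> (N%:R : R)^-1 by apply/funext.
exact: RE_uniform_le.
Qed.
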